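(* Let $\mathcal{R}$ be a right amenable cell space with finite stabiliser $G_0$, let $(\mathcal{R},Q,N,\delta)$ be a semi-cellular automaton with $Q$ finite and $N$ finite, whose global transition function is $\Delta$, and let $\mathcal{F}=(F_i)_{i\in I}$ be a right Følner net in $\mathcal{R}$. Suppose $\delta$ is $\bullet$-invariant, $Q$ contains at least two elements, and $\Delta$ is not pre-injective. Then $\mathrm{h}_{\mathcal{F}}(\Delta(Q^M))<\log|Q|$.
   Context: A cell space $\mathcal{R}$ consists of a group $G$ acting transitively on the left on a nonempty set $M$ via $\triangleright$, a point $m_0\in M$ and a family $(g_{m_0,m})_{m\in M}$ in $G$ with $g_{m_0,m}\triangleright m_0=m$. $G_0$ is the stabiliser of $m_0$, $G/G_0$ the set of left cosets, with $G$ acting by $g\cdot hG_0=ghG_0$. The right semi-action $\triangleleft\colon M\times G/G_0\to M$ is $m\triangleleft gG_0=g_{m_0,m}g\triangleright m_0$. $\mathcal{R}$ is right amenable if there is a finitely additive probability measure $\mu$ on the power set of $M$ such that $\mu(\{a\triangleleft\mathfrak{g}:a\in A\})=\mu(A)$ whenever $\mathfrak{g}\in G/G_0$, $A\subseteq M$ and $m\mapsto m\triangleleft\mathfrak{g}$ is injective on $A$. A right Følner net in $\mathcal{R}$ is a net $(F_i)_{i\in I}$ (over a directed set) of nonempty finite subsets of $M$ with $\lim_{i}\frac{|F_i\setminus\{m: m\triangleleft\mathfrak{g}\in F_i\}|}{|F_i|}=0$ for every $\mathfrak{g}\in G/G_0$. A semi-cellular automaton is $(\mathcal{R},Q,N,\delta)$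 with $Q$ a set, $N\subseteq G/G_0$ with $G_0\cdot N\subseteq N$, $\delta\colon Q^N\to Q$; its global transition function is $\Delta(c)(m)=\delta(n\mapsto c(m\triangleleft n))$. $\delta$ is $\bullet$-invariant if $\delta(g_0\bullet\ell)=\delta(\ell)$ for all $g_0\in G_0$, $\ell\in Q^N$, where $(g_0\bullet\ell)(n)=\ell(g_0^{-1}\cdot n)$. For $A\subseteq M$, $\pi_A\colon Q^M\to Q^A$ is restriction; $\mathrm{h}_{\mathcal{F}}(X)=\limsup_{i\in I}\frac{\log|\pi_{F_i}(X)|}{|F_i|}$ for $X\subseteq Q^M$. $\Delta$ is pre-injective if for all $c,c'\in Q^M$ such that $\{m: c(m)\neq c'(m)\}$ is finite and $\Delta(c)=\Delta(c')$ we have $c=c'$. *)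

From HB Require Import structures.
From mathcomp Require Import all_boot all_order all_algebra.
From mathcomp Require Import finmap.
From mathcomp Require Import boolp classical_sets cardinality reals ereal exp.
From mathcomp Require Import Rstruct.
From Stdlib Require Import Rdefinitions.
Set Implicit Arguments. Unset Strict Implicit. Unset Printing Implicit Defensive.
Import Order.TTheory GRing.Theory Num.Theory.
Local Open Scope classical_set_scope.
Local Open Scope ring_scope.

Record group := Group {
  gT :> Type;
  gmul : gT -> gT -> gT;
  gone : gT;
  ginv : gT -> gT;
  gmulA : forall x y z, gmul x (gmul y z) = gmul (gmul x y) z;
  gmul1 : forall x, gmul gone x = x;
  gmulV : forall x, gmul (ginv x) x = gone }.

(* M is taken to be a choiceType
   (harmless classically), so that finite subsets can be handled as {fset M}. *)
Record cell_space := CellSpace {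
  cs_G : group;
  cs_M : choiceType;
  cs_act : cs_G -> cs_M -> cs_M;
  cs_act1 : forall m, cs_act (gone cs_G) m = m;
  cs_actM : forall g h m, cs_act (gmul g h) m = cs_act g (cs_act h m);
  cs_trans : forall m m', exists g, cs_act g m = m';
  cs_m0 : cs_M;
  cs_coord : cs_M -> cs_G;
  cs_coordP : forall m, cs_act (cs_coord m) cs_m0 = m }.

Section CellSpaceDefs.
Variable S : cell_space.
Local Notation G := (cs_G S).
Local Notation M := (cs_M S).
Local Notation "g |> m" := (cs_act g m) (at level 40).

Definition stab : set G := [set g | g |> cs_m0 S = cs_m0 S].

(* left cosets g G_0, represented as subsets of G; G/G_0 is the set of these *)
Definition coset (g : G) : set G := [set x | exists2 g0, stab g0 & x = gmul g g0].
Definition cosets : set (set G) := [set C | exists g, C = coset g].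

(* a chosen representative of a coset (arbitrary for non-cosets) *)
Definition rep (C : set G) : G :=
  match pselect (exists g, C = coset g) with
  | left h => projT1 (cid h)
  | right _ => gone G
  end.

Definition semi_act (m : M) (C : set G) : M := (gmul (cs_coord m) (rep C)) |> cs_m0 S.

Definition right_amenable : Prop :=
  exists mu : set M -> R,
    (forall A, (0 <= mu A)%R) /\ mu setT = 1%R /\
    (forall A B, A `&` B = set0 -> mu (A `|` B) = (mu A + mu B)%R) /\
    (forall (g : G) (A : set M),
        (forall a b, A a -> A b ->
           semi_act a (coset g) = semi_act b (coset g) -> a = b) ->
        mu [set semi_act a (coset g) | a in A] = mu A).

Definition directed (I : Type) (le : I -> I -> Prop) : Prop :=
  (exists i : I, True) /\ (forall i, le i i) /\
  (forall i j k, le i j -> le j k -> le i k) /\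
  (forall i j, exists2 k, le i k & le j k).

Definition right_folner_net (I : Type) (le : I -> I -> Prop) (F : I -> {fset M}) : Prop :=
  directed le /\ (forall i, F i != fset0) /\
  forall g : G, forall eps : R, (0 < eps)%R -> exists i0, forall i, le i0 i ->
    (`| (#|` [fset m in F i | semi_act m (coset g) \notin F i]%fset |%:R
          / #|` F i |%:R) | < eps)%R.

Definition global_trans (Q : Type) (N : set (set G))
    (delta : ({n : set G | N n} -> Q) -> Q) (c : M -> Q) : M -> Q :=
  fun m => delta (fun n => c (semi_act m (proj1_sig n))).

(* bullet-invariance: delta (g0 . l) = delta l, where (g0 . l)(n) = l(g0^-1 . n);
   l' below is exactly g0 . l (g . C is the coset predicate x |-> C (g^-1 x)). *)
Definition bullet_invariant (Q : Type) (N : set (set G))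
    (delta : ({n : set G | N n} -> Q) -> Q) : Prop :=
  forall g0, stab g0 -> forall l l' : {n : set G | N n} -> Q,
    (forall n n' : {n : set G | N n},
        proj1_sig n' = (fun x => proj1_sig n (gmul (ginv g0) x)) -> l n = l' n') ->
    delta l' = delta l.

Definition pre_injective (Q : Type) (D : (M -> Q) -> (M -> Q)) : Prop :=
  forall c c' : M -> Q, finite_set [set m | c m <> c' m] -> D c = D c' -> c = c'.

Definition proj_set (Q : finType) (A : {fset M}) (X : set (M -> Q)) : {set {ffun A -> Q}} :=
  [set p | `[< exists2 c, X c & p = [ffun x : A => c (val x)] >] ].

Definition entropy (Q : finType) (I : Type) (le : I -> I -> Prop) (F : I -> {fset M})
    (X : set (M -> Q)) : \bar R :=
  ereal_inf [set ereal_sup [set ((ln (#|proj_set (F j) X|%:R) / #|` F j|%:R)%R)%:E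
                           | j in [set j | le i j]] | i in [set: I]].

End CellSpaceDefs.

(* Let c and c' be configurations with the same image under Delta that differ
   on a nonempty finite set, and let E be a finite window containing that set
   together with every neighbourhood g N m0 that meets it.  Since Delta is
   G-equivariant, inside any translate of E showing the pattern of c' that
   pattern may be replaced by the pattern of c without changing the image.
   A maximal family of pairwise disjoint translates of E inside a Folner set F
   has at least |F| / (2 |E|^2 |G_0|) members, so every pattern of Delta(Q^M) on
   F is induced by a pattern on a slightly larger set W that avoids the
   pattern of c' on each of these k tiles.  Hence
     |pi_F(Delta(Q^M))| <= |Q|^|W| (1 - |Q|^-|E|)^k,
   and taking logarithms the entropy drops by a fixed amount below log |Q|. *)

From Stdlib Require Import Rdefinitions.
From HB Require Import structures.
From mathcomp Require Import all_boot all_order all_algebra.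
From mathcomp Require Import finmap.
From mathcomp Require Import boolp classical_sets cardinality reals ereal exp.
From mathcomp Require Import Rstruct.
From mathcomp Require Import zify ring lra.
Set Implicit Arguments. Unset Strict Implicit. Unset Printing Implicit Defensive.
Import Order.TTheory GRing.Theory Num.Theory.
Local Open Scope classical_set_scope.

Lemma exists_maximal_packing (T : eqType) (r : T -> T -> Prop) (L : seq T) :
  (forall x y, r x y -> r y x) -> {in L, forall x, r x x} ->
  exists P : seq T, [/\ uniq P, {subset P <= L},
    {in P &, forall p q, r p q -> p = q} & {in L, forall m, exists2 p, p \in P & r m p}].
Proof.
move=> r_sym; elim: L => [|m L IH] r_refl; first by exists [::].
have [|P [uP sP dP cP]] := IH; first by move=> z zL; apply: r_refl; rewrite inE zL orbT.
have [[p Pp mp]|H] := pselect (exists2 p, p \in P & r m p).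
  exists P; split => //; first by move=> z /sP zL; rewrite inE zL orbT.
  by move=> z; rewrite inE => /predU1P [->|/cP //]; exists p.
exists (m :: P); split.
- rewrite /= uP andbT; apply: contra_notN H => mP; exists m => //.
  by apply: r_refl; rewrite mem_head.
- by move=> z; rewrite !inE => /predU1P [->|/sP ->]; rewrite ?eqxx ?orbT.
- move=> p q; rewrite !inE => /predU1P [->|Pp] /predU1P [->|Pq] //.
  + by move=> mq; case: H; exists q.
  + by move=> /r_sym pm; case: H; exists p.
  + exact: dP.
- move=> z; rewrite inE => /predU1P [->|/cP [p Pp zp]].
    by exists m; [rewrite mem_head | apply: r_refl; rewrite mem_head].
  by exists p => //; rewrite inE Pp orbT.
Qed.

Lemma count_predC_le_sum (T T' : eqType) (s : seq T) (a : pred T) (bs : seq T')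
    (b : T' -> pred T) :
  (forall x, ~~ a x -> has (fun e => b e x) bs) ->
  (count (predC a) s <= \sum_(e <- bs) count (b e) s)%N.
Proof.
move=> cover; elim: s => [|x s IH] /=; first by rewrite big1.
rewrite big_split /= leq_add //; case: (boolP (a x)) => //= /cover.
by elim: bs {cover IH} => [|e bs IHbs] //=; rewrite big_cons; case: (b e x).
Qed.

Lemma count_enum_fset_le (T : choiceType) (F : {fset T}) (P : pred T) :
  (count P (enum_fset F) <= #|` [fset m in F | P m]%fset|)%N.
Proof.
rewrite -size_filter; apply: uniq_leq_size; first exact/filter_uniq/fset_uniq.
by move=> x; rewrite mem_filter !inE andbC.
Qed.

Lemma card_bigfcup_le (T : choiceType) (I : Type) (r : seq I) (B : I -> {fset T}) :
  (#|` (\bigcup_(i <- r) B i)%fset| <= \sum_(i <- r) #|` B i|)%N.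
Proof.
elim: r => [|i r IH]; first by rewrite !big_nil cardfs0.
by rewrite !big_cons (leq_trans (leq_card_fsetU _ _).1) // leq_add2l.
Qed.

Section RealInequalities.
Local Open Scope ring_scope.

Lemma ler_sum_seq_const (T : eqType) (r : seq T) (f : T -> R) (C : R) :
  {in r, forall i, f i <= C} -> \sum_(i <- r) f i <= (size r)%:R * C.
Proof.
elim: r => [|x r IH] fC; first by rewrite big_nil mul0r.
rewrite big_cons /= mulrSr mulrDl mul1r addrC lerD ?fC ?mem_head //.
by apply: IH => i ri; apply: fC; rewrite inE ri orbT.
Qed.

Lemma ln_le_of_card_le (P q W A k : nat) : (0 < P)%N -> (0 < q)%N -> (1 < A)%N ->
  (P * A ^ k <= q ^ W * (A - 1) ^ k)%N ->
  ln (P%:R : R) <= W%:R * ln q%:R - k%:R * (ln A%:R - ln (A - 1)%:R).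
Proof.
move=> P0 q0 A1; rewrite -(ler_nat R) !natrM !natrX => ineq.
have [P0' q0' A0 A10] : [/\ 0 < P%:R :> R, 0 < q%:R :> R, 0 < A%:R :> R & 0 < (A - 1)%:R :> R].
  by split; rewrite ltr0n //; lia.
have : ln (P%:R * A%:R ^+ k) <= ln (q%:R ^+ W * (A - 1)%:R ^+ k :> R).
  by rewrite ler_ln // posrE ?mulr_gt0 ?exprn_gt0.
rewrite !lnM ?posrE ?exprn_gt0 // !lnXn // !mulr_natl; lra.
Qed.

(* With [u = ka / b]: at least [n / (2 b)] tiles save [k ka >= n u / 2], while the
   neighbourhood costs at most [n u / 4] more than [n lq]. *)
Lemma rate_bound (n k W lp lq ka b x y : R) :
  0 < n -> 0 <= lq -> 0 < ka -> 0 < b -> lp <= W * lq - k * ka ->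
  n <= k * b + x * n -> W <= n + y * n -> x <= 1 / 2 -> y * lq <= ka / (4 * b) ->
  lp / n <= lq - ka / (4 * b).
Proof.
move=> n0 lq0 ka0 b0 hlp hn hW hx hy.
rewrite ler_pdivrMr //.
set u := ka / b.
have u0 : 0 < u by rewrite divr_gt0.
have kau : ka = u * b by rewrite /u mulrVK // unitfE gt_eqF.
have e4 : ka / (4 * b) = u / 4 by rewrite /u; field; rewrite gt_eqF.
rewrite e4 in hy *; rewrite kau in hlp.
have hk : n / 2 <= k * b by nra.
have hku : n / 2 * u <= k * b * u by rewrite ler_wpM2r // ltW.
have hWl : W * lq <= n * lq + n * (y * lq) by nra.
have hyn : n * (y * lq) <= n * (u / 4) by rewrite ler_wpM2l // ltW.
nra.
Qed.

Lemma exists_small_pos (x y z : R) : 0 <= x -> 0 <= y -> 0 < z ->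
  exists2 eps, 0 < eps & x * eps <= 1 / 2 /\ y * eps <= z.
Proof.
move=> x0 y0 z0; set p := 1 / (2 * (x + 1)); set q := z / (y + 1).
have [p0 q0] : 0 < p /\ 0 < q by rewrite !divr_gt0 ?mulr_gt0 //; lra.
exists (Num.min p q); first by rewrite lt_min p0 q0.
have [mp mq] : Num.min p q <= p /\ Num.min p q <= q by rewrite !ge_min !lexx orbT.
split; [apply: le_trans (ler_wpM2l x0 mp) _ | apply: le_trans (ler_wpM2l y0 mq) _].
  by rewrite /p mulrA ler_pdivrMr ?mulr_gt0 //; lra.
by rewrite /q mulrA ler_pdivrMr //; nra.
Qed.

End RealInequalities.

Section GroupTheory.
Variable G : group.
Implicit Types x y z : G.

Lemma gmulKg x y : gmul (ginv x) (gmul x y) = y.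
Proof. by rewrite gmulA gmulV gmul1. Qed.

Lemma gmulgV x : gmul x (ginv x) = gone G.
Proof.
have h : gmul (ginv (ginv x)) (gmul (ginv x) (gmul x (ginv x))) = gone G.
  by rewrite [gmul (ginv x) _]gmulKg gmulV.
by rewrite gmulKg in h.
Qed.

Lemma gmulg1 x : gmul x (gone G) = x.
Proof. by rewrite -(gmulV x) gmulA gmulgV gmul1. Qed.

Lemma gmulVKg x y : gmul x (gmul (ginv x) y) = y.
Proof. by rewrite gmulA gmulgV gmul1. Qed.

Lemma gmulgK x y : gmul (gmul y x) (ginv x) = y.
Proof. by rewrite -gmulA gmulgV gmulg1. Qed.

Lemma gmulg_injr x y z : gmul y x = gmul z x -> y = z.
Proof. by move=> h; rewrite -(gmulgK x y) h gmulgK. Qed.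

End GroupTheory.

Section CellSpace.
Variable S : cell_space.
Local Notation G := (cs_G S).
Local Notation M := (cs_M S).
Local Notation act := (@cs_act S).
Local Notation m0 := (cs_m0 S).
Local Notation coord := (@cs_coord S).

Lemma cs_actK (g : G) m : act (ginv g) (act g m) = m.
Proof. by rewrite -cs_actM gmulV cs_act1. Qed.

Lemma cs_actVK (g : G) m : act g (act (ginv g) m) = m.
Proof. by rewrite -cs_actM gmulgV cs_act1. Qed.

Lemma stab1 : @stab S (gone G).
Proof. by rewrite /stab /= cs_act1. Qed.

Lemma stab_coordV (g : G) m : act g m0 = m -> @stab S (gmul (ginv (coord m)) g).
Proof. by move=> <-; rewrite /stab /= cs_actM -{2}(cs_coordP (act g m0)) cs_actK. Qed.

Lemma coset_rep (C : set G) : (exists g, C = @coset S g) -> C = @coset S (rep C).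
Proof. by rewrite /rep; case: pselect => [h|h] H //; exact: (proj2_sig (cid h)). Qed.

Lemma rep_coset (r : G) : exists2 g0, @stab S g0 & rep (@coset S r) = gmul r g0.
Proof.
rewrite /rep; case: pselect => [h|[]]; last by exists r.
case: (cid h) => r' /= E.
have : @coset S r' r' by exists (gone G); [exact: stab1 | rewrite gmulg1].
by rewrite -E => -[g0 s0 ->]; exists g0.
Qed.

Lemma semi_act_coset m (r : G) : semi_act m (@coset S r) = act (coord m) (act r m0).
Proof. by case: (rep_coset r) => g0 s0 e; rewrite /semi_act e !cs_actM s0. Qed.

Definition lmul (g : G) (C : set G) : set G := fun x => C (gmul (ginv g) x).

Lemma lmul_coset (g r : G) : lmul g (@coset S r) = @coset S (gmul g r).
Proof.
rewrite /lmul /coset; apply/funext => x /=; apply/propext; split.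
  by case=> g0 s0 e; exists g0 => //; rewrite -gmulA -e gmulVKg.
by case=> g0 s0 ->; exists g0 => //; rewrite -gmulA gmulKg.
Qed.

Definition coord_shift (h : G) (m : M) : G :=
  gmul (ginv (coord (act (ginv h) m))) (gmul (ginv h) (coord m)).

Lemma stab_coord_shift h m : @stab S (coord_shift h m).
Proof. by apply: stab_coordV; rewrite cs_actM cs_coordP. Qed.

Lemma act_semi_act h m r :
  act (ginv h) (semi_act m (@coset S r)) =
  semi_act (act (ginv h) m) (lmul (coord_shift h m) (@coset S r)).
Proof. by rewrite lmul_coset !semi_act_coset /coord_shift !cs_actM cs_actVK. Qed.

Lemma global_trans_equivariant (Q : Type) (N : set (set G))
    (delta : ({n : set G | N n} -> Q) -> Q) :
  bullet_invariant delta -> N `<=` @cosets S -> forall (c : M -> Q) h m,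
  global_trans delta (fun p => c (act (ginv h) p)) m =
  global_trans delta c (act (ginv h) m).
Proof.
move=> bi Nc c h m; rewrite /global_trans.
symmetry; apply: (bi (coord_shift h m)); first exact: stab_coord_shift.
by move=> [n Nn] [n' Nn'] /= ->; case: (Nc _ Nn) => r ->; rewrite act_semi_act.
Qed.

Definition nbr (a : G) (n : set G) : M := act (gmul a (rep n)) m0.

Lemma act_semi_act_nbr (g : G) m n : act g (semi_act m n) = nbr (gmul g (coord m)) n.
Proof. by rewrite /semi_act /nbr -cs_actM gmulA. Qed.

Lemma exists_nbr_closed (D : set M) (N : set (set G)) :
  finite_set D -> finite_set (@stab S) -> finite_set N ->
  exists E : {fset M}, (forall d, D d -> d \in E) /\
    (forall a n n2, N n -> N n2 -> D (nbr a n) -> nbr a n2 \in E).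
Proof.
move=> fD fS fN.
(* If [d = nbr a n] then [a = g_{m0,d} g0 (rep n)^-1] for some [g0] in [G_0]. *)
pose f (x : M * G * set G * set G) :=
  act (gmul (gmul (gmul (coord x.1.1.1) x.1.1.2) (ginv (rep x.1.2))) (rep x.2)) m0.
have fE : finite_set (D `|` f @` (D `*` @stab S `*` N `*` N)).
  by rewrite finite_setU; split => //; apply/finite_image; do 3 apply: finite_setX => //.
exists (fset_set (D `|` f @` (D `*` @stab S `*` N `*` N))); split.
  by move=> d Dd; rewrite in_fset_set //; apply/mem_set; left.
move=> a n n2 Nn Nn2 Dan; rewrite in_fset_set //; apply/mem_set; right.
exists (nbr a n, gmul (ginv (coord (nbr a n))) (gmul a (rep n)), n, n2).
  by do 3 split => //; exact: stab_coordV.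
by rewrite /f /= gmulVKg gmulgK.
Qed.

End CellSpace.

Section Tiles.
Variable S : cell_space.
Local Notation G := (cs_G S).
Local Notation M := (cs_M S).
Local Notation act := (@cs_act S).
Local Notation coord := (@cs_coord S).
Variable E : {fset M}.

Definition in_tile (p m : M) : bool := act (ginv (coord p)) m \in E.

Lemma in_tile_act p e : in_tile p (act (coord p) e) = (e \in E).
Proof. by rewrite /in_tile cs_actK. Qed.

Section Repatch.
Variables (Q : Type) (N : set (set G)) (delta : ({n : set G | N n} -> Q) -> Q).
Variables (c c' : M -> Q).

Definition has_pattern (x : M -> Q) (p : M) : Prop :=
  forall e, e \in E -> x (act (coord p) e) = c' e.

Variable P : seq M.
Hypothesis disjoint_tiles :
  forall p q m, p \in P -> q \in P -> in_tile p m -> in_tile q m -> p = q.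
Hypothesis diff_in_E : forall d, c d <> c' d -> d \in E.

(* Inside every tile of [P] on which [x] shows the pattern of [c'], put the pattern of [c]. *)
Definition repatch (x : M -> Q) (m : M) : Q :=
  match pselect (exists p, [/\ p \in P, has_pattern x p &
                   c (act (ginv (coord p)) m) <> c' (act (ginv (coord p)) m)]) with
  | left H => c (act (ginv (coord (proj1_sig (cid H)))) m)
  | right _ => x m
  end.

Lemma repatch_pattern x p m : p \in P -> has_pattern x p -> in_tile p m ->
  repatch x m = c (act (ginv (coord p)) m).
Proof.
move=> Pp xp pm; rewrite /repatch; case: pselect => [H|H].
  by case: (cid H) => q /= [Pq _ /diff_in_E qm]; rewrite (disjoint_tiles Pq Pp qm pm).
have := xp _ pm; rewrite cs_actVK => ->.
by apply: contra_notP H => ne; exists p; split => // /esym.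
Qed.

Lemma repatch_nopattern x p m : p \in P -> ~ has_pattern x p -> in_tile p m ->
  repatch x m = x m.
Proof.
move=> Pp xp pm; rewrite /repatch; case: pselect => [H|//].
by case: (cid H) => q /= [Pq xq /diff_in_E qm]; rewrite (disjoint_tiles Pq Pp qm pm) in xq.
Qed.

Lemma repatch_avoids (d0 : M) x p : c d0 <> c' d0 -> p \in P -> ~ has_pattern (repatch x) p.
Proof.
move=> cd0 Pp yp; have [xp|xp] := pselect (has_pattern x p).
  have := yp d0 (diff_in_E cd0).
  by rewrite (repatch_pattern Pp xp) ?in_tile_act ?cs_actK //; exact: diff_in_E.
apply: (xp) => e Ee; rewrite -(yp e Ee) (repatch_nopattern Pp xp) //.
by rewrite in_tile_act.
Qed.

Hypothesis bi : bullet_invariant delta.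
Hypothesis N_cosets : N `<=` @cosets S.
Hypothesis same_image : global_trans delta c = global_trans delta c'.
Hypothesis nbr_closed :
  forall a n n2, N n -> N n2 -> c (nbr a n) <> c' (nbr a n) -> nbr a n2 \in E.

(* A cell whose neighbourhood meets a repatched cell has its whole neighbourhood
   in that tile, where [c] and [c'] have the same image by equivariance. *)
Lemma global_trans_repatch x : global_trans delta (repatch x) = global_trans delta x.
Proof.
apply/funext => m; rewrite /global_trans.
case: (pselect (exists n, N n /\ exists p, [/\ p \in P, has_pattern x p &
    c (act (ginv (coord p)) (semi_act m n)) <> c' (act (ginv (coord p)) (semi_act m n))]))
  => [[n [Nn [p [Pp xp cn]]]] | H]; last first.
  congr delta; apply/funext => -[n Nn] /=; rewrite /repatch; case: pselect => // H'.
  by case: H; exists n.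
rewrite act_semi_act_nbr in cn.
have nbr_tile n2 : N n2 -> in_tile p (semi_act m n2).
  by move=> Nn2; rewrite /in_tile act_semi_act_nbr; exact: nbr_closed cn.
transitivity (global_trans delta (fun z => c (act (ginv (coord p)) z)) m).
  by congr delta; apply/funext => -[n2 Nn2] /=; exact: repatch_pattern (nbr_tile _ Nn2).
transitivity (global_trans delta (fun z => c' (act (ginv (coord p)) z)) m).
  by rewrite !global_trans_equivariant // same_image.
congr delta; apply/funext => -[n2 Nn2] /=.
by rewrite -(xp _ (nbr_tile _ Nn2)) cs_actVK.
Qed.

End Repatch.
End Tiles.

Section Counting.
Variable S : cell_space.
Local Notation M := (cs_M S).
Local Notation act := (@cs_act S).
Local Notation coord := (@cs_coord S).
Variables (Q : finType) (q0 : Q) (c' : M -> Q) (E W : {fset M}).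

Definition extend (p : {ffun W -> Q}) (m : M) : Q :=
  if insub m is Some w then p w else q0.

Lemma extend_val p (w : W) : extend p (val w) = p w.
Proof. by rewrite /extend valK. Qed.

Lemma extend_out p m : m \notin W -> extend p m = q0.
Proof. by move=> h; rewrite /extend insubF //; apply/negbTE. Qed.

Definition avoiding (P : seq M) : {set {ffun W -> Q}} :=
  [set p | `[< forall t, t \in P -> ~ has_pattern E c' (extend p) t >] ].

Definition with_pattern (t : M) : {set {ffun W -> Q}} :=
  [set p | `[< has_pattern E c' (extend p) t >] ].

(* Overwriting the tile at [t] with the pattern of [c'], while remembering its
   former content, maps [avoiding P] injectively into [avoiding P :&: with_pattern t] x Q^E. *)
Lemma card_avoiding_le (P : seq M) (t : M) :
  (forall e, e \in E -> act (coord t) e \in W) ->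
  (forall t' m, t' \in P -> in_tile E t m -> in_tile E t' m -> False) ->
  (#|avoiding P| <= #|avoiding P :&: with_pattern t| * #|Q| ^ #|` E|)%N.
Proof.
move=> tW disj.
pose overwrite (p : {ffun W -> Q}) : {ffun W -> Q} :=
  [ffun w : W => if in_tile E t (val w) then c' (act (ginv (coord t)) (val w)) else p w].
pose content (p : {ffun W -> Q}) : {ffun E -> Q} :=
  [ffun e : E => extend p (act (coord t) (val e))].
pose Phi p := (overwrite p, content p).
have Phi_inj : injective Phi.
  move=> p p' [e1 e2]; apply/ffunP => w.
  case: (boolP (in_tile E t (val w))) => hE.
    have := congr1 (fun f : {ffun E -> Q} => f (FSetSub hE)) e2.
    by rewrite !ffunE /= cs_actVK !extend_val.
  by have := congr1 (fun f : {ffun W -> Q} => f w) e1; rewrite !ffunE (negbTE hE).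
have extend_overwrite p m : ~~ in_tile E t m -> extend (overwrite p) m = extend p m.
  case: (boolP (m \in W)) => [mW|mW] hE; last by rewrite !extend_out.
  by rewrite -[m]/(val (FSetSub mW)) !extend_val ffunE /= (negbTE hE).
have sub : Phi @: avoiding P \subset
    finset.setX (avoiding P :&: with_pattern t) [set: {ffun E -> Q}]%SET.
  apply/fintype.subsetP => z /imsetP [p Sp ->].
  rewrite finset.in_setX finset.in_setT andbT !inE; apply/andP; split.
    apply/asboolP => t' Pt' mt; move: Sp; rewrite inE => /asboolP Sp.
    apply: (Sp t' Pt') => e He; rewrite -(mt e He) extend_overwrite //.
    by apply/negP => hT; apply: (disj t' _ Pt' hT); rewrite in_tile_act.
  apply/asboolP => e He.
  by rewrite -[act _ e]/(val (FSetSub (tW e He))) extend_val ffunE /= in_tile_act He cs_actK.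
rewrite -(card_imset _ Phi_inj) (leq_trans (subset_leq_card sub)) //.
by rewrite cardsX cardsT card_ffun cardfE.
Qed.

Lemma card_avoiding (P : seq M) : uniq P ->
  (forall t e, t \in P -> e \in E -> act (coord t) e \in W) ->
  (forall t t' m, t \in P -> t' \in P -> in_tile E t m -> in_tile E t' m -> t = t') ->
  (#|avoiding P| * (#|Q| ^ #|` E|) ^ size P <=
     #|Q| ^ #|` W| * (#|Q| ^ #|` E| - 1) ^ size P)%N.
Proof.
elim: P => [|t P IH] /=.
  by rewrite !expn0 !muln1 (leq_trans (max_card _)) // card_ffun cardfE.
case/andP => tP uP tW disj.
have inP z : z \in P -> z \in t :: P by move=> h; rewrite inE h orbT.
have IHP := IH uP (fun t0 e h => tW t0 e (inP _ h))
  (fun a b m ha hb => disj a b m (inP _ ha) (inP _ hb)).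
have disj_t t' m : t' \in P -> in_tile E t m -> in_tile E t' m -> False.
  move=> h h1 h2; have e := disj t t' m (mem_head _ _) (inP _ h) h1 h2.
  by rewrite e h in tP.
have step := card_avoiding_le (fun e He => tW t e (mem_head _ _) He) disj_t.
have card_split : (#|avoiding (t :: P)| + #|avoiding P :&: with_pattern t| = #|avoiding P|)%N.
  rewrite -(cardsID (with_pattern t) (avoiding P)) addnC; congr (_ + _)%N.
  apply: eq_card => p; rewrite !inE; apply/asboolP/andP.
    move=> h; split; first by apply/asboolP => h'; apply: (h t (mem_head _ _)).
    by apply/asboolP => t' Pt'; apply: h; rewrite inE Pt' orbT.
  by case=> /asboolP h1 /asboolP h2 t'; rewrite inE => /orP [/eqP ->|] //; exact: h2.
set A := (#|Q| ^ #|` E|)%N in step IHP *.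
have h1 : (#|avoiding (t :: P)| * A <= #|avoiding P| * (A - 1))%N by nia.
rewrite !expnS mulnA (leq_trans (leq_mul h1 (leqnn _))) // -mulnA mulnCA.
by rewrite [X in _ <= X]mulnCA leq_mul2l IHP orbT.
Qed.

End Counting.

Section Packing.
Variable S : cell_space.
Local Notation G := (cs_G S).
Local Notation M := (cs_M S).
Local Notation act := (@cs_act S).
Local Notation m0 := (cs_m0 S).
Local Notation coord := (@cs_coord S).
Variable E : {fset M}.

Definition tiles_meet (p q : M) : Prop := exists m, in_tile E p m /\ in_tile E q m.

Variable s : seq {classic G}.
Hypothesis stab_s : forall g : G, @stab S g -> (g : {classic G}) \in s.

(* A cell [m] meeting the tile at [p] is determined by [p], two points of [E] and
   an element of the stabiliser, which bounds the number of such cells. *)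
Lemma size_le_packing (L P : seq M) : uniq L ->
  {in L, forall m, exists2 p, p \in P & tiles_meet m p} ->
  (size L <= size P * #|` E| * #|` E| * size s)%N.
Proof.
move=> uL cov.
pose Y := [seq (x, i) | x <- [seq (y, e2) | y <- [seq (p, e1) | p <- P, e1 <- enum_fset E],
                                            e2 <- enum_fset E], i <- iota 0 (size s)].
have sY : size Y = (size P * #|` E| * #|` E| * size s)%N by rewrite !size_allpairs size_iota.
pose good (m : M) (l : M * M * M * nat) :=
  act (coord m) l.1.1.2 = act (coord l.1.1.1) l.1.2 /\
  gmul (coord m) (coord l.1.1.2) =
  gmul (coord (act (coord l.1.1.1) l.1.2)) (nth (gone G : {classic G}) s l.2).
have ex m : m \in L -> exists l, good m l /\ l \in Y.
  move=> mL; have [p Pp [y [my py]]] := cov m mL.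
  set e1 := act (ginv (coord m)) y; set e2 := act (ginv (coord p)) y.
  set g0 := gmul (ginv (coord y)) (gmul (coord m) (coord e1)).
  have s0 : @stab S g0 by apply: stab_coordV; rewrite cs_actM cs_coordP cs_actVK.
  exists (p, e1, e2, index (g0 : {classic G}) s); split.
    by rewrite /good /= /e1 /e2 !cs_actVK nth_index ?stab_s // /g0 gmulVKg.
  apply: allpairs_f; last by rewrite mem_iota /= add0n index_mem stab_s.
  by apply: allpairs_f => //; apply: allpairs_f.
pose f m := if pselect (exists l, good m l /\ l \in Y) is left H then proj1_sig (cid H)
            else (m0, m0, m0, 0%N).
have fP m : m \in L -> good m (f m) /\ f m \in Y.
  by move=> mL; rewrite /f; case: pselect => [H|[]]; [case: (cid H) | exact: ex].
rewrite -sY -(size_map f); apply: uniq_leq_size; last first.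
  by move=> l /mapP [m mL ->]; case: (fP m mL).
rewrite map_inj_in_uniq // => m m' mL m'L e.
have [[_ gm] _] := fP m mL; have [[_ gm'] _] := fP m' m'L.
rewrite e -gm' in gm.
by rewrite -(cs_coordP m) -(cs_coordP m') (gmulg_injr gm).
Qed.

End Packing.

Section TilingBounds.
Variable S : cell_space.
Local Notation G := (cs_G S).
Local Notation M := (cs_M S).
Local Notation act := (@cs_act S).
Local Notation coord := (@cs_coord S).

Definition boundary (F : {fset M}) (n : set G) : nat :=
  #|` [fset m in F | semi_act m n \notin F]%fset|.

Variable sN : seq (set G).

Definition nbhd (F : {fset M}) : {fset M} :=
  (F `|` \bigcup_(n <- sN) [fset semi_act m n | m in [fset m in F | semi_act m n \notin F]])%fset.

Lemma card_nbhd_le F : (#|` nbhd F| <= #|` F| + \sum_(n <- sN) boundary F n)%N.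
Proof.
rewrite (leq_trans (leq_card_fsetU _ _).1) // leq_add2l.
by rewrite (leq_trans (card_bigfcup_le _ _)) // leq_sum // => n _; apply: leq_imfset_card.
Qed.

Variable E : {fset M}.
Variable s : seq {classic G}.
Hypothesis stab_s : forall g : G, @stab S g -> (g : {classic G}) \in s.

Lemma exists_tiling (d0 : M) (F : {fset M}) : d0 \in E ->
  exists P : seq M, [/\ uniq P,
    (forall t e, t \in P -> e \in E -> act (coord t) e \in F),
    (forall t t' m, t \in P -> t' \in P -> in_tile E t m -> in_tile E t' m -> t = t') &
    (#|` F| <= size P * #|` E| * #|` E| * size s +
       \sum_(e <- enum_fset E) boundary F (@coset S (coord e)))%N].
Proof.
move=> Ed0.
pose inner m := all (fun e => act (coord m) e \in F) (enum_fset E).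
pose L := [seq m <- enum_fset F | inner m].
have meet_sym p q : tiles_meet E p q -> tiles_meet E q p by case=> m [pm qm]; exists m.
have meet_refl : {in L, forall m, tiles_meet E m m}.
  by move=> m _; exists (act (coord m) d0); rewrite in_tile_act Ed0.
have [P [uP sP dP cP]] := exists_maximal_packing meet_sym meet_refl.
exists P; split => //.
- by move=> t e /sP; rewrite mem_filter => /andP [/allP tF _] Ee; exact: tF.
- by move=> t t' m tP t'P tm t'm; apply: dP => //; exists m.
rewrite -(count_predC inner) leq_add //.
  rewrite -size_filter; apply: size_le_packing => //; exact/filter_uniq/fset_uniq.
apply: (leq_trans (count_predC_le_sum _ (b := fun e m => act (coord m) e \notin F) _)).
  by move=> m; rewrite -has_predC; apply: sub_has.
apply: leq_sum => e _; apply: leq_trans (count_enum_fset_le _ _).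
by apply: eq_leq; apply: eq_count => m; rewrite semi_act_coset cs_coordP.
Qed.

End TilingBounds.

Section ProjectionBound.
Variable S : cell_space.
Local Notation G := (cs_G S).
Local Notation M := (cs_M S).
Local Notation act := (@cs_act S).
Local Notation coord := (@cs_coord S).
Variables (Q : finType) (N : set (set G)) (delta : ({n : set G | N n} -> Q) -> Q).
Variables (c c' : M -> Q) (d0 : M) (E : {fset M}) (sN : seq (set G)).
Hypothesis bi : bullet_invariant delta.
Hypothesis N_cosets : N `<=` @cosets S.
Hypothesis same_image : global_trans delta c = global_trans delta c'.
Hypothesis cd0 : c d0 <> c' d0.
Hypothesis diff_in_E : forall d, c d <> c' d -> d \in E.
Hypothesis nbr_closed :
  forall a n n2, N n -> N n2 -> c (nbr a n) <> c' (nbr a n) -> nbr a n2 \in E.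
Hypothesis N_sN : forall n, N n -> n \in sN.

Lemma card_proj_le_avoiding (F : {fset M}) (P : seq M) :
  (forall t e, t \in P -> e \in E -> act (coord t) e \in F) ->
  (forall t t' m, t \in P -> t' \in P -> in_tile E t m -> in_tile E t' m -> t = t') ->
  (#|proj_set F (range (global_trans delta))| <= #|avoiding (c d0) c' E (nbhd sN F) P|)%N.
Proof.
move=> PF disj.
pose restrict (p : {ffun nbhd sN F -> Q}) : {ffun F -> Q} :=
  [ffun f : F => delta (fun n => extend (c d0) p (semi_act (val f) (proj1_sig n)))].
rewrite (leq_trans _ (leq_imset_card restrict _)) // subset_leq_card //.
apply/fintype.subsetP => z; rewrite inE => /asboolP [_ [x _ <-] ->].
pose y := repatch E c c' P x.
pose py : {ffun nbhd sN F -> Q} := [ffun w => y (val w)].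
have extend_py m : m \in nbhd sN F -> extend (c d0) py m = y m.
  by move=> mW; rewrite -[m]/(val (FSetSub mW)) extend_val ffunE.
apply/imsetP; exists py.
  rewrite inE; apply/asboolP => t tP yt; apply: (repatch_avoids disj diff_in_E (x := x) cd0 tP).
  by move=> e Ee; rewrite -(yt e Ee) extend_py // in_fsetU PF.
apply/ffunP => f.
rewrite !ffunE -(global_trans_repatch disj diff_in_E bi N_cosets same_image nbr_closed).
congr delta; apply/funext => -[n Nn] /=; rewrite extend_py // in_fsetU.
case: (boolP (semi_act (val f) n \in F)) => //= nF.
apply/bigfcupP; exists n; first by rewrite N_sN.
by apply/imfsetP; exists (val f) => //; rewrite !inE nF (valP f).
Qed.

End ProjectionBound.

Section Folner.
Variable S : cell_space.
Local Notation G := (cs_G S).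
Local Notation M := (cs_M S).
Local Open Scope ring_scope.

Lemma right_folner_eventually (I : Type) (le : I -> I -> Prop) (F : I -> {fset M}) :
  right_folner_net le F -> forall (gs : seq {classic G}) (eps : R), 0 < eps ->
  exists i0, forall i, le i0 i -> forall g : {classic G}, g \in gs ->
    (boundary (F i) (@coset S g))%:R < eps * #|` F i|%:R.
Proof.
case=> [[[i0 _] [_ [transI dirI]]] [F0 folner]] + eps eps0.
elim=> [|g gs [i1 IH]]; first by exists i0.
have [i2 Hi2] := folner g eps (elimT RltP eps0).
have [k i1k i2k] := dirI i1 i2.
exists k => i ki g'; rewrite inE => /predU1P [->|g'gs]; last first.
  exact: IH (transI _ _ _ i1k ki) _ g'gs.
have Fi0 : (0 < #|` F i|%:R :> R) by rewrite ltr0n lt0n cardfs_eq0 F0.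
have /RltP := Hi2 i (transI _ _ _ i2k ki).
by rewrite RdivE ger0_norm ?divr_ge0 // ltr_pdivrMr.
Qed.

Lemma entropy_le_eventually (Q : finType) (I : Type) (le : I -> I -> Prop)
    (F : I -> {fset M}) (X : set (M -> Q)) (i0 : I) (r : R) :
  (forall j, le i0 j -> ln (#|proj_set (F j) X|%:R) / #|` F j|%:R <= r) ->
  (entropy le F X <= r%:E)%E.
Proof.
move=> bound; apply: le_trans (ereal_inf_lbound _) _; first by exists i0.
by apply: ge_ereal_sup => _ [j ij <-]; rewrite lee_fin; exact: bound.
Qed.

End Folner.

Section EntropyDrop.
Variable S : cell_space.
Local Notation G := (cs_G S).
Local Notation M := (cs_M S).
Local Notation coord := (@cs_coord S).
Variables (Q : finType) (N : set (set G)) (delta : ({n : set G | N n} -> Q) -> Q).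
Variables (c c' : M -> Q) (d0 : M) (E : {fset M}) (s : seq {classic G}) (sN : seq (set G)).
Hypothesis bi : bullet_invariant delta.
Hypothesis N_cosets : N `<=` @cosets S.
Hypothesis same_image : global_trans delta c = global_trans delta c'.
Hypothesis cd0 : c d0 <> c' d0.
Hypothesis diff_in_E : forall d, c d <> c' d -> d \in E.
Hypothesis nbr_closed :
  forall a n n2, N n -> N n2 -> c (nbr a n) <> c' (nbr a n) -> nbr a n2 \in E.
Hypothesis stab_s : forall g : G, @stab S g -> (g : {classic G}) \in s.
Hypothesis N_sN : forall n, N n <-> n \in sN.
Hypothesis Q2 : (1 < #|Q|)%N.
Local Open Scope ring_scope.

Let a := #|` E|.
Let A := (#|Q| ^ a)%N.
Let b : R := (a * a * size s)%:R.
Let ka : R := ln A%:R - ln (A - 1)%:R.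
Let lq : R := ln #|Q|%:R.

Let gs : seq {classic G} :=
  [seq (coord e : {classic G}) | e <- enum_fset E] ++ [seq rep n | n <- sN].

Lemma card_window_gt0 : (0 < a)%N.
Proof. by rewrite /a cardfs_gt0; apply/fset0Pn; exists d0; exact: diff_in_E. Qed.

Lemma card_patterns_gt1 : (1 < A)%N.
Proof.
apply: leq_trans Q2 _; rewrite /A -{1}(expn1 #|Q|) leq_pexp2l ?card_window_gt0 //.
exact: ltnW.
Qed.

Lemma pattern_gain_gt0 : 0 < ka.
Proof.
have A1 := card_patterns_gt1.
by rewrite /ka subr_gt0 ltr_ln ?posrE ?ltr0n ?ltr_nat //; lia.
Qed.

Lemma tile_factor_gt0 : 0 < b.
Proof.
have s0 : (0 < size s)%N by have := stab_s (@stab1 S); case: (s).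
by rewrite /b ltr0n !muln_gt0 card_window_gt0 s0.
Qed.

Lemma ln_card_ge0 : 0 <= lq.
Proof. by rewrite /lq ln_ge0 // ler1n ltnW. Qed.

Section FolnerSet.
Variables (F : {fset M}) (eps : R).
Hypothesis small_boundary :
  forall g, g \in gs -> (boundary F (@coset S g))%:R < eps * #|` F|%:R.

Lemma card_le_tiles (k : nat) :
  (#|` F| <= k * a * a * size s + \sum_(e <- enum_fset E) boundary F (@coset S (coord e)))%N ->
  #|` F|%:R <= k%:R * b + a%:R * eps * #|` F|%:R.
Proof.
rewrite -(ler_nat R) natrD natr_sum => /le_trans; apply.
rewrite /b !natrM !mulrA lerD2l -mulrA; apply: ler_sum_seq_const => e Ee.
by apply/ltW/small_boundary; rewrite mem_cat map_f.
Qed.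

Lemma card_nbhd_le_eps : #|` nbhd sN F|%:R <= #|` F|%:R + (size sN)%:R * eps * #|` F|%:R.
Proof.
apply: le_trans (_ : _ <= #|` F|%:R + \sum_(n <- sN) (boundary F n)%:R) _.
  by rewrite -natr_sum -natrD ler_nat card_nbhd_le.
rewrite lerD2l -mulrA; apply: ler_sum_seq_const => n nN.
rewrite (coset_rep (N_cosets ((N_sN n).2 nN))); apply/ltW/small_boundary.
by rewrite mem_cat map_f ?orbT.
Qed.

Lemma ln_card_proj_le : F != fset0 ->
  a%:R * eps <= 1 / 2 -> (size sN)%:R * lq * eps <= ka / (4 * b) ->
  ln (#|proj_set F (range (global_trans delta))|%:R) / #|` F|%:R <= lq - ka / (4 * b).
Proof.
move=> F0 aeps yeps.
have [P [uP PF disj hF]] := exists_tiling stab_s F (diff_in_E cd0).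
have PW t e : t \in P -> e \in E -> cs_act (coord t) e \in nbhd sN F.
  by move=> tP Ee; rewrite in_fsetU PF.
have hP := leq_trans (leq_mul (card_proj_le_avoiding bi N_cosets same_image cd0 diff_in_E
  nbr_closed (fun n => (N_sN n).1) PF disj) (leqnn _)) (card_avoiding (c d0) c' uP PW disj).
have proj0 : (0 < #|proj_set F (range (global_trans delta))|)%N.
  apply/card_gt0P; exists [ffun f : F => global_trans delta c (val f)].
  by rewrite inE; apply/asboolP; exists (global_trans delta c) => //; exists c.
apply: rate_bound (card_le_tiles hF) card_nbhd_le_eps aeps _.
- by rewrite ltr0n cardfs_gt0.
- exact: ln_card_ge0.
- exact: pattern_gain_gt0.
- exact: tile_factor_gt0.
- by apply: ln_le_of_card_le hP => //; [lia | exact: card_patterns_gt1].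
- by rewrite mulrAC.
Qed.

End FolnerSet.

Lemma entropy_lt_ln_card (I : Type) (le : I -> I -> Prop) (F : I -> {fset M}) :
  right_folner_net le F ->
  (entropy le F (range (global_trans delta)) < (ln (#|Q|%:R : R))%:E)%E.
Proof.
move=> folner.
have gain0 : 0 < ka / (4 * b) by rewrite divr_gt0 ?mulr_gt0 ?pattern_gain_gt0 ?tile_factor_gt0.
have [eps eps0 [aeps yeps]] :=
  exists_small_pos (ler0n _ a) (mulr_ge0 (ler0n _ (size sN)) ln_card_ge0) gain0.
have [i0 Hi0] := right_folner_eventually folner gs eps0.
apply: le_lt_trans (entropy_le_eventually (i0 := i0) (r := (lq - ka / (4 * b))%R) _) _.
  move=> j ij; have F0 : F j != fset0 by case: folner => _ [].
  exact: ln_card_proj_le (Hi0 j ij) F0 aeps yeps.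
by rewrite lte_fin ltrBlDr ltrDl.
Qed.

End EntropyDrop.

Theorem theorem6 (S : cell_space) (Q : finType) (N : set (set (cs_G S)))
    (delta : ({n : set (cs_G S) | N n} -> Q) -> Q)
    (I : Type) (le : I -> I -> Prop) (F : I -> {fset cs_M S}) :
  right_amenable S ->
  finite_set (@stab S) ->
  N `<=` @cosets S ->
  (forall g0 g, @stab S g0 -> N (coset g) -> N (coset (gmul g0 g))) ->
  finite_set N ->
  right_folner_net le F ->
  bullet_invariant delta ->
  (1 < #|Q|)%N ->
  ~ pre_injective (global_trans delta) ->
  (entropy le F (range (global_trans delta)) < (ln (#|Q|%:R : R))%:E)%E.
Proof.
move=> _ fS N_cosets _ fN folner bi Q2 not_preinj.
have /existsNP [c /existsNP [c' /not_implyP [fD /not_implyP [same_image cc']]]] := not_preinj.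
have [d0 cd0] : exists d0, c d0 <> c' d0.
  by apply/existsNP => cc'_eq; apply: cc'; apply/funext.
have [E [diff_in_E nbr_closed]] := exists_nbr_closed fD fS fN.
have [s stabE] := (finite_seqP (T := {classic (cs_G S)}) (@stab S)).1 fS.
have stab_s (g : cs_G S) : @stab S g -> (g : {classic (cs_G S)}) \in s by rewrite stabE.
have [sN NE] := (finite_seqP N).1 fN.
have N_sN n : N n <-> n \in sN by rewrite NE.
exact: (entropy_lt_ln_card bi N_cosets same_image cd0 diff_in_E nbr_closed stab_s N_sN Q2 folner).
Qed.
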